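(* Let $n,m,k\ge 1$, let $S$ be a Boolean $n\times m$ matrix, and put $\bar n=n+2$, $\bar m=m+2$, $\bar k=k+2$. Let $\bar S$ be the Boolean $\bar n\times\bar m$ matrix whose first row is all ones, whose first column is all ones, whose entries $\bar s_{ij}$ with $i\ge 2$, $j=2$ or with $i=2$, $j\ge 2$ are $0$, and whose lower-right $n\times m$ block is $S$, i.e. $\bar s_{ij}=s_{i-2,j-2}$ for $i,j\ge 3$. Suppose there exist a Boolean $\bar n\times\bar k$ matrix $\bar E$ and a Boolean $\bar k\times\bar m$ matrix $\bar P$ with $\bar S=\bar E\cdot\bar P$. Then there also exist Boolean matrices $\bar E$ ($\bar n\times\bar k$) and $\bar P$ ($\bar k\times\bar m$) with $\bar S=\bar E\cdot\bar P$ which additionally satisfy: (i) the first row of $\bar E$ is all ones; (ii) the second row of $\bar E$ is $(1,0,\dots,0)$; (iii) $\bar e_{i2}=0$ for all $i\ge 3$; (iv) the first row of $\bar P$ is $(1,0,\dots,0)$; (v) the first column of $\bar P$ is all ones; (vi) $\bar p_{22}=1$.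
   Context: All matrices are over the Boolean algebra $(\{0,1\},\vee,\wedge)$. The Boolean matrix product of an $n\times k$ matrix $E=(e_{ia})$ and a $k\times m$ matrix $P=(p_{aj})$ is the $n\times m$ matrix $E\cdot P$ with entries $(E\cdot P)_{ij}=\bigvee_{a=1}^{k}(e_{ia}\wedge p_{aj})$. *)

(* Boolean matrices are 'M[bool]_(n, m). Indices are 0-based:
   paper's row/column 1 is index 0, row/column 2 is index 1. *)
From mathcomp Require Import all_boot all_algebra.
Set Implicit Arguments. Unset Strict Implicit. Unset Printing Implicit Defensive.

Definition bmul n k m (E : 'M[bool]_(n, k)) (P : 'M[bool]_(k, m)) : 'M[bool]_(n, m) :=
  \matrix_(i < n, j < m) [exists a : 'I_k, E i a && P a j].

(* The bordered matrix S-bar of size (n+2) x (m+2); 'I_(n.+2) is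
   convertible to 'I_(2 + n), and split decomposes an index into the first
   two indices (inl) or an index of the lower-right block S (inr). *)
Definition Sbar n m (S : 'M[bool]_(n, m)) : 'M[bool]_(n.+2, m.+2) :=
  \matrix_(i < n.+2, j < m.+2)
    if (i == 0 :> nat) || (j == 0 :> nat) then true
    else match @split 2 n i, @split 2 m j with
         | inr i', inr j' => S i' j'
         | _, _ => false
         end.

Definition ord1' {n : nat} : 'I_n.+2 := Ordinal (isT : 1 < n.+2).

From mathcomp Require Import all_boot all_algebra.
From mathcomp Require Import fingroup perm.
Set Implicit Arguments. Unset Strict Implicit. Unset Printing Implicit Defensive.

(* The border of S-bar is rigid: its first row and first column are all
   ones, its second row is the unit row (1,0,...,0) and its second column
   the unit column (1,0,...,0)^T.  In a product E.P, a unit column of the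
   product is produced by some inner index a whose column in E is that same
   unit column (and with P a 2 = 1); dually the second row of S-bar yields an
   inner index b whose row in P is the unit row (and with E 2 b = 1).  These
   indices differ, so a permutation of the inner dimension, which never
   changes a Boolean product, moves b to position 1 and a to position 2.
   Finally the first two rows of E and the first column of P can be
   overwritten by the prescribed patterns without changing the product,
   because the corresponding entries of S-bar are forced by the border. *)

Lemma bmulE n k m (E : 'M[bool]_(n, k)) (P : 'M[bool]_(k, m)) i j :
  bmul E P i j = [exists a, E i a && P a j].
Proof. by rewrite mxE. Qed.

Section BorderedMatrix.

Variables (n m : nat) (S : 'M[bool]_(n, m)).

Lemma Sbar_row0 (j : 'I_m.+2) : Sbar S ord0 j.
Proof. by rewrite mxE. Qed.

Lemma Sbar_col0 (i : 'I_n.+2) : Sbar S i ord0.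
Proof. by rewrite mxE orbT. Qed.

Lemma Sbar_row1 (j : 'I_m.+2) : Sbar S ord1' j = ((j : nat) == 0).
Proof.
rewrite mxE /=; case: eqP => //= _.
by case: (@splitP 2 n ord1') => [x|x] //=; case: (nat_of_ord x).
Qed.

Lemma Sbar_col1 (i : 'I_n.+2) : Sbar S i ord1' = ((i : nat) == 0).
Proof.
rewrite mxE /= orbF; case: eqP => //= _.
by case: (@splitP 2 n i) => [x|x] _; case: (@splitP 2 m ord1') => [y|y] //=;
  case: (nat_of_ord y).
Qed.

End BorderedMatrix.

Section UnitLines.

Variables (n k m : nat) (E : 'M[bool]_(n, k)) (P : 'M[bool]_(k, m)).

Lemma bmul_unit_col (i0 : 'I_n) (j0 : 'I_m) :
  (forall i, bmul E P i j0 = (i == i0)) ->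
  exists a, (forall i, E i a = (i == i0)) /\ P a j0.
Proof.
move=> col_j0; have := col_j0 i0; rewrite eqxx bmulE => /existsP [a /andP [Ei0a Paj0]].
exists a; split=> // i; case: eqVneq => [-> //| ne_i].
apply/negbTE/negP => Eia; move: (col_j0 i); rewrite (negbTE ne_i) bmulE.
by move/existsP; apply; exists a; rewrite Eia.
Qed.

Lemma bmul_unit_row (i0 : 'I_n) (j0 : 'I_m) :
  (forall j, bmul E P i0 j = (j == j0)) ->
  exists b, (forall j, P b j = (j == j0)) /\ E i0 b.
Proof.
move=> row_i0; have := row_i0 j0; rewrite eqxx bmulE => /existsP [b /andP [Ei0b Pbj0]].
exists b; split=> // j; case: eqVneq => [-> //| ne_j].
apply/negbTE/negP => Pbj; move: (row_i0 j); rewrite (negbTE ne_j) bmulE.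
by move/existsP; apply; exists b; rewrite Ei0b Pbj.
Qed.

End UnitLines.

Lemma perm_send_two (T : finType) (x1 x2 y1 y2 : T) :
  x1 != x2 -> y1 != y2 -> exists s : {perm T}, s x1 = y1 /\ s x2 = y2.
Proof.
move=> ne_x ne_y; pose t := tperm x1 y1; pose u := tperm (t x2) y2.
have t_x1 : t x1 = y1 by rewrite tpermL.
have ne_tx : t x2 != y1 by rewrite -t_x1 (inj_eq perm_inj) eq_sym.
exists (t * u)%g; rewrite !permM t_x1 /u tpermL tpermD //.
by rewrite eq_sym.
Qed.

Lemma bmul_perm n k m (s : {perm 'I_k}) (E : 'M[bool]_(n, k)) (P : 'M[bool]_(k, m)) :
  bmul (\matrix_(i, c) E i (s c)) (\matrix_(c, j) P (s c) j) = bmul E P.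
Proof.
apply/matrixP => i j; rewrite !bmulE.
apply/existsP/existsP => [[c]|[c Eic]]; first by rewrite !mxE; exists (s c).
by exists (s^-1%g c); rewrite !mxE permKV.
Qed.

Section Border.

Variables (n k m : nat).

Definition border_rows (E : 'M[bool]_(n.+2, k.+1)) : 'M[bool]_(n.+2, k.+1) :=
  \matrix_(i, c) if (i : nat) == 0 then true
                 else if (i : nat) == 1 then (c : nat) == 0 else E i c.

Definition border_col (P : 'M[bool]_(k.+1, m.+1)) : 'M[bool]_(k.+1, m.+1) :=
  \matrix_(c, j) if (j : nat) == 0 then true else P c j.

Lemma bmul_border (F : 'M[bool]_(n.+2, m.+1)) E P :
  F = bmul E P ->
  (forall j, F ord0 j) -> (forall i, F i ord0) ->
  (forall j, F ord1' j = ((j : nat) == 0)) ->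
  (forall j, P ord0 j = ((j : nat) == 0)) ->
  F = bmul (border_rows E) (border_col P).
Proof.
move=> F_EP row0 col0 row1 P_row0; apply/matrixP => i j; rewrite bmulE.
have [j0 | nz_j] := eqVneq (j : nat) 0.
  have -> : j = ord0 by apply: val_inj.
  rewrite col0; symmetry; apply/existsP.
  have [i0 | nz_i] := eqVneq (i : nat) 0; first by exists ord0; rewrite !mxE i0.
  have [i1 | ne1_i] := eqVneq (i : nat) 1; first by exists ord0; rewrite !mxE i1.
  have := col0 i; rewrite F_EP bmulE => /existsP [c /andP [Eic _]].
  by exists c; rewrite !mxE (negbTE nz_i) (negbTE ne1_i) Eic.
have [i0 | nz_i] := eqVneq (i : nat) 0.
  have -> : i = ord0 by apply: val_inj.
  rewrite row0; symmetry; apply/existsP.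
  have := row0 j; rewrite F_EP bmulE => /existsP [c /andP [_ Pcj]].
  by exists c; rewrite !mxE (negbTE nz_j) Pcj.
have [i1 | ne1_i] := eqVneq (i : nat) 1.
  have -> : i = ord1' by apply: val_inj.
  rewrite row1 (negbTE nz_j); symmetry; apply/existsP => [[c]].
  rewrite !mxE /= (negbTE nz_j); case: (eqVneq (c : nat) 0) => //= c0.
  have -> : c = ord0 by apply: val_inj.
  by rewrite P_row0 (negbTE nz_j).
rewrite F_EP bmulE; apply: eq_existsb => c.
by rewrite !mxE (negbTE nz_i) (negbTE ne1_i) (negbTE nz_j).
Qed.

End Border.

Theorem lemma1 (n m k : nat) (Hn : 1 <= n) (Hm : 1 <= m) (Hk : 1 <= k)
  (S : 'M[bool]_(n, m)) :
  (exists (E : 'M[bool]_(n.+2, k.+2)) (P : 'M[bool]_(k.+2, m.+2)),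
      Sbar S = bmul E P) ->
  exists (E : 'M[bool]_(n.+2, k.+2)) (P : 'M[bool]_(k.+2, m.+2)),
    Sbar S = bmul E P /\
    (forall a : 'I_k.+2, E ord0 a = true) /\
    (forall a : 'I_k.+2, E ord1' a = ((a : nat) == 0)) /\
    (forall i : 'I_n.+2, (2 <= i)%N -> E i ord1' = false) /\
    (forall j : 'I_m.+2, P ord0 j = ((j : nat) == 0)) /\
    (forall a : 'I_k.+2, P a ord0 = true) /\
    P ord1' ord1' = true.
Proof.
move=> [E [P S_EP]].
have [a [E_col_a Pa1]] : exists a, (forall i, E i a = (i == ord0)) /\ P a ord1'.
  by apply: bmul_unit_col => i; rewrite -S_EP Sbar_col1.
have [b [P_row_b E1b]] : exists b, (forall j, P b j = (j == ord0)) /\ E ord1' b.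
  by apply: bmul_unit_row => j; rewrite -S_EP Sbar_row1.
have ne_ba : b != a by apply: contraTneq E1b => ->; rewrite E_col_a.
have [s [s0 s1]] := perm_send_two (isT : ord0 != ord1' :> 'I_k.+2) ne_ba.
set E1 := (\matrix_(i, c) E i (s c))%R.
set P1 := (\matrix_(c, j) P (s c) j)%R.
have S_EP1 : Sbar S = bmul E1 P1 by rewrite bmul_perm.
exists (border_rows E1), (border_col P1); split.
  apply: bmul_border => //; [exact: Sbar_row0 | exact: Sbar_col0 | exact: Sbar_row1 |].
  by move=> j; rewrite mxE s0 P_row_b.
do 5?split.
- by move=> c; rewrite mxE.
- by move=> c; rewrite mxE.
- by move=> [[|[|i]] lt_i] //= _; rewrite mxE /= /E1 mxE s1 E_col_a.
- by move=> [[|j] lt_j]; rewrite mxE //= /P1 mxE s0 P_row_b.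
- by move=> c; rewrite mxE.
- by rewrite mxE /= /P1 mxE s1.
Qed.
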